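(* For every integer $n\ge1$, every $n$-EP operator $T\in\mathcal{L}(\mathcal{H})$ is $(n+1)$-EP.
   Context: $\mathcal{H}$ is a Hilbert space, $\mathcal{L}(\mathcal{H})$ the bounded operators on it. For $T$ with closed range, $T^\dagger$ is its Moore–Penrose inverse (unique solution of $TT^\dagger T=T$, $T^\dagger TT^\dagger=T^\dagger$, $(T^\dagger T)^*=T^\dagger T$, $(TT^\dagger)^*=TT^\dagger$). For $m\ge1$, $T$ is $m$-EP if it has closed range and $T^mT^\dagger=T^\dagger T^m$. *)

From mathcomp Require Import all_boot all_order all_algebra.
From mathcomp Require Import reals.
From mathcomp.real_closed Require Import complex.
Set Implicit Arguments. Unset Strict Implicit. Unset Printing Implicit Defensive.
Import Order.TTheory GRing.Theory Num.Theory.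
Local Open Scope ring_scope.

Section Hilbert.
Variables (R : realType) (V : lmodType R[i]) (ip : V -> V -> R[i]).

Definition hnorm (x : V) : R[i] := sqrtC (ip x x).

Definition hcauchy (u : nat -> V) : Prop :=
  forall e : R[i], 0 < e -> exists N : nat,
    forall m k : nat, (N <= m)%N -> (N <= k)%N -> hnorm (u m - u k) < e.

Definition hconverges (u : nat -> V) (l : V) : Prop :=
  forall e : R[i], 0 < e -> exists N : nat,
    forall k : nat, (N <= k)%N -> hnorm (u k - l) < e.

Definition is_hilbert_space : Prop :=
  [/\ (forall (a : R[i]) (x y z : V), ip (a *: x + y) z = a * ip x z + ip y z),
      (forall x y : V, ip y x = (ip x y)^*),
      (forall x : V, 0 <= ip x x),
      (forall x : V, ip x x = 0 -> x = 0)
    & (forall u : nat -> V, hcauchy u -> exists l : V, hconverges u l)].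

Definition bounded_op (T : V -> V) : Prop :=
  (forall (a : R[i]) (x y : V), T (a *: x + y) = a *: T x + T y) /\
  exists M : R[i], forall x : V, hnorm (T x) <= M * hnorm x.

Definition closed_range (T : V -> V) : Prop :=
  forall (u : nat -> V) (y : V),
    (forall k, exists x, u k = T x) -> hconverges u y -> exists x, y = T x.

Definition self_adjoint (A : V -> V) : Prop :=
  forall x y : V, ip (A x) y = ip x (A y).

Definition is_MP_inverse (T S : V -> V) : Prop :=
  [/\ bounded_op S,
      (forall x, T (S (T x)) = T x),
      (forall x, S (T (S x)) = S x),
      self_adjoint (S \o T)
    & self_adjoint (T \o S)].

Definition m_EP (m : nat) (T : V -> V) : Prop :=
  closed_range T /\
  exists S : V -> V, is_MP_inverse T S /\
    (forall x, iter m T (S x) = S (iter m T x)).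

End Hilbert.

(* Only T T^+ T = T is needed: when n >= 1 and T^n commutes with T^+, both
   T^(n+1) T^+ = T (T^+ T^n) and T^+ T^(n+1) = (T^n T^+) T collapse to T^n. *)
From mathcomp Require Import all_boot all_order all_algebra.
From mathcomp Require Import reals.
From mathcomp.real_closed Require Import complex.

Set Implicit Arguments. Unset Strict Implicit.

Section IterCommPinv.
Variables (X : Type) (T S : X -> X).
Hypothesis TST : forall x, T (S (T x)) = T x.
Variable n : nat.
Hypothesis iter_comm : forall x, iter n.+1 T (S x) = S (iter n.+1 T x).

Lemma iterS_pinv_l x : iter n.+2 T (S x) = iter n.+1 T x.
Proof. by rewrite iterS iter_comm iterS TST. Qed.

Lemma iterS_pinv_r x : S (iter n.+2 T x) = iter n.+1 T x.
Proof. by rewrite iterSr -iter_comm iterSr TST -iterSr. Qed.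

Lemma iterS_comm_pinv x : iter n.+2 T (S x) = S (iter n.+2 T x).
Proof. by rewrite iterS_pinv_l iterS_pinv_r. Qed.

End IterCommPinv.

Theorem mainTheorem18 (R : realType) (V : lmodType R[i]) (ip : V -> V -> R[i])
  (hH : is_hilbert_space ip) (n : nat) (hn : (1 <= n)%N)
  (T : V -> V) (hT : bounded_op ip T) :
  m_EP ip n T -> m_EP ip n.+1 T.
Proof.
case: n hn => [//|n] _ [closedT [S [MP_S comm_n]]].
have [_ TST _ _ _] := MP_S.
split=> //; exists S; split=> //.
exact (iterS_comm_pinv TST comm_n).
Qed.
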